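(* Let $G=(V,E_1,\dots,E_k)$ be a complete edge-colored graph. If every monochromatic subgraph $G_{|i}$ of $G$ is a simple permutation graph (each with respect to some labeling, possibly depending on $i$) and $G$ does not contain a rainbow triangle, then $G$ is a complete edge-colored permutation graph.
   Context: A complete $k$-edge-colored graph $G=(V,E_1,\dots,E_k)$ is the complete graph on a finite set $V$ with edges partitioned into $k$ nonempty color classes $E_i$ (the one-vertex graph also counts); $G_{|i}=(V,E_i)$. A labeling is a bijection $\ell:V\to\{1,\dots,|V|\}$. A graph $(V,E)$ with labeling $\ell$ is a simple permutation graph of a permutation $\pi$ if for all $u,v$ with $\ell(u)>\ell(v)$: $\{u,v\}\in E$ iff $\pi^{-1}(\ell(u))<\pi^{-1}(\ell(v))$; a graph is a simple permutation graph if such $\ell$ and $\pi$ exist. $G$ is a complete edge-colored permutation graph if there exist a single labeling $\ell$ and permutations $\pi_1,\dots,\pi_k$ with $(G_{|i},\ell)$ a simple permutation graph of $\pi_i$ for all $i$. A rainbow triangle is a set of three vertices whose three edges have pairwise distinct colors. *)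

From mathcomp Require Import all_boot all_fingroup.
Set Implicit Arguments. Unset Strict Implicit. Unset Printing Implicit Defensive.

(* A complete k-edge-colored graph on the finite vertex type V: a colouring
   c u v : 'I_k of every unordered pair {u,v}, u <> v (c is symmetric, its
   value on the diagonal is irrelevant), and each colour class is nonempty
   (except in the one-vertex graph, which has no edges). *)
Definition complete_edge_colored (V : finType) (k : nat) (c : V -> V -> 'I_k) : Prop :=
  (forall u v : V, u != v -> c u v = c v u) /\
  (1 < #|V| -> forall i : 'I_k, exists u v : V, u != v /\ c u v = i).

(* A labeling: a bijection V -> {1..|V|}, represented with values 0..|V|-1. *)
Definition labeling (V : finType) (l : V -> 'I_#|V|) : Prop := bijective l.

Definition simple_perm_graph_of (V : finType) (E : V -> V -> bool)
    (l : V -> 'I_#|V|) (pi : 'S_#|V|) : Prop :=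
  forall u v : V, l v < l u ->
    (E u v <-> (pi^-1)%g (l u) < (pi^-1)%g (l v)).

Definition simple_perm_graph (V : finType) (E : V -> V -> bool) : Prop :=
  exists l : V -> 'I_#|V|, labeling l /\ exists pi : 'S_#|V|, simple_perm_graph_of E l pi.

Definition color_class (V : finType) (k : nat) (c : V -> V -> 'I_k) (i : 'I_k) : V -> V -> bool :=
  fun u v => (u != v) && (c u v == i).

Definition complete_edge_colored_perm_graph (V : finType) (k : nat) (c : V -> V -> 'I_k) : Prop :=
  exists l : V -> 'I_#|V|, labeling l /\
    forall i : 'I_k, exists pi : 'S_#|V|, simple_perm_graph_of (color_class c i) l pi.

Definition rainbow_triangle (V : finType) (k : nat) (c : V -> V -> 'I_k) (x y z : V) : Prop :=
  [/\ x != y, y != z, x != z &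
      [/\ c x y != c y z, c y z != c x z & c x y != c x z]].

From mathcomp Require Import all_boot all_fingroup.
From mathcomp Require Import zify.
Set Implicit Arguments. Unset Strict Implicit. Unset Printing Implicit Defensive.

(* Without rainbow triangles, a single labeling works for every color class
   as soon as it orders V so that, for x < y < z, c x y = c y z forces
   c x z = c x y: each color class and its complement are then transitively
   oriented along the order, which characterizes permutation graphs.
   Such an order is built by induction on vertex sets S.  If the color-i
   edges inside S have a component X that contains an edge but not all of S,
   then X is a module (every vertex of S outside X sees X in one color), and
   orders of X and of S with X contracted to a point combine
   lexicographically.  Otherwise every color used in S is connected and
   spanning; Gallai's argument (delete a vertex and induct) shows that at
   most two colors are then used, and the permutation labeling of either
   color class already orders S correctly. *)

Lemma connect_ind (T : finType) (e : rel T) (P : pred T) x :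
  P x -> (forall a b, connect e x a -> P a -> e a b -> P b) ->
  forall y, connect e x y -> P y.
Proof.
move=> Px step y /connectP[p]; elim/last_ind: p y => [|p b IH] y /=; first by move=> _ ->.
rewrite rcons_path last_rcons => /andP[pth eab] ->.
have xa : connect e x (last x p) by apply/connectP; exists p.
exact: step xa (IH _ pth erefl) eab.
Qed.

Lemma ltn_lexM K a b d e : d < K -> e < K ->
  (a * K + d < b * K + e) = (a < b) || (a == b) && (d < e).
Proof.
move=> dK eK; case: (ltngtP a b) => [ab|ba|->] /=; last by rewrite ltn_add2l.
- have : a.+1 * K <= b * K by rewrite leq_mul2r ab orbT.
  by rewrite mulSn; lia.
- have : b.+1 * K <= a * K by rewrite leq_mul2r ba orbT.
  by rewrite mulSn; lia.
Qed.

Section StrictTotalOrders.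

Variables (T : finType) (prec : rel T).
Hypothesis prec_total : forall x y, x != y -> prec x y || prec y x.

Lemma tournament_transitive :
  (forall x y, prec x y -> ~~ prec y x) ->
  (forall x y z, prec x y -> prec y z -> ~~ prec z x) -> transitive prec.
Proof.
move=> asym no_3cycle y x z pxy pyz; have [xz|/prec_total] := eqVneq x z.
  by move: (asym _ _ pxy); rewrite xz pyz.
by case/orP=> // pzx; move: (no_3cycle _ _ _ pxy pyz); rewrite pzx.
Qed.

Hypotheses (prec_irr : irreflexive prec) (prec_trans : transitive prec).

Let rank x := #|[set w | prec w x]|.

Let rank_lt_card x : rank x < #|T|.
Proof.
rewrite -cardsT; apply: proper_card; apply/properP; split; first exact: subsetT.
by exists x; rewrite ?inE ?prec_irr.
Qed.

Let rank_mono x y : prec x y -> rank x < rank y.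
Proof.
move=> pxy; apply: proper_card; apply/properP; split.
  by apply/subsetP => w; rewrite !inE => /prec_trans; apply.
by exists x; rewrite !inE ?prec_irr.
Qed.

Lemma strict_total_order_rank :
  exists2 f : T -> 'I_#|T|, bijective f & forall x y, (f x < f y) = prec x y.
Proof.
have ltn_rank x y : (rank x < rank y) = prec x y.
  apply/idP/idP; last exact: rank_mono.
  have [<-|/prec_total/orP[//|/rank_mono ryx rxy]] := eqVneq x y; first by rewrite ltnn.
  by move: (ltn_trans rxy ryx); rewrite ltnn.
exists (fun x => Ordinal (rank_lt_card x)) => //.
apply: inj_card_bij; last by rewrite card_ord.
move=> x y /(congr1 val) /= rxy; apply/eqP; apply: contraT => /prec_total.
by rewrite -!ltn_rank rxy ltnn.
Qed.

End StrictTotalOrders.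

Definition transitive_along (T : Type) (r : T -> nat) (E : rel T) :=
  forall x y z, r x < r y -> r y < r z -> E x y = E y z -> E x z = E x y.

Section PermutationGraphs.

Variables (V : finType) (E : rel V) (l : V -> 'I_#|V|).
Hypothesis E_sym : symmetric E.

Lemma simple_perm_graph_of_transitive pi :
  simple_perm_graph_of E l pi -> transitive_along l E.
Proof.
move=> pg x y z lxy lyz Exy; set p := fun v => (pi^-1)%g (l v).
have pgE u v : l v < l u -> E u v = (p u < p v) by move=> h; apply/idP/idP => /(pg u v h).
have p_neq u v : l u < l v -> p u != p v.
  by move=> luv; apply: contraTneq luv => /perm_inj ->; rewrite ltnn.
have lxz := ltn_trans lxy lyz.
rewrite !(E_sym x) ![E y z]E_sym !pgE // in Exy *.
move: (p_neq _ _ lxy) (p_neq _ _ lyz) (p_neq _ _ lxz) Exy.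
rewrite -!val_eqE; lia.
Qed.

Hypotheses (l_bij : bijective l) (E_tr : transitive_along l E).

Let l_neq u v : u != v -> (l u == l v :> nat) = false.
Proof. by move=> uv; apply: contraNF uv => /eqP/val_inj/(bij_inj l_bij) ->. Qed.

(* Non-edges point up and edges point down in [l]; [pi^-1] will rank [V] along [prec]. *)
Let prec u v := (u != v) && (if l u < l v then ~~ E u v else E u v).

Let prec_total u v : u != v -> prec u v || prec v u.
Proof.
move=> uv; rewrite /prec uv eq_sym uv E_sym /=.
by case: ltngtP (l_neq uv) => // _ _; case: (E v u).
Qed.

Let prec_asym u v : prec u v -> ~~ prec v u.
Proof.
rewrite /prec E_sym => /andP[uv]; have := l_neq uv.
by case: ltngtP => // _ _; case: (E v u); rewrite /= ?andbF.
Qed.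

Let no_3cycle_from_min u v w : l u < l v -> l u < l w ->
  prec u v -> prec v w -> ~~ prec w u.
Proof.
move=> luv luw /andP[_]; rewrite /prec luv (ltnNge (l w)) (ltnW luw) /= => nEuv /andP[vw].
have := l_neq vw; case: ltngtP => // [lvw|lwv] _ Evw; apply/negP => /andP[_].
  by rewrite E_sym (E_tr luv lvw) (negbTE nEuv) // (negbTE Evw).
rewrite E_sym => Euw; move: (E_tr luw lwv).
by rewrite Euw (E_sym w v) Evw (negbTE nEuv) => /(_ erefl).
Qed.

Let no_3cycle u v w : prec u v -> prec v w -> ~~ prec w u.
Proof.
move=> puv pvw; apply/negP => pwu.
move: (l_neq (andP puv).1) (l_neq (andP pvw).1) (l_neq (andP pwu).1) => ne1 ne2 ne3.
have [[h1 h2]|[[h1 h2]|[h1 h2]]] :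
    [/\ l u < l v & l u < l w] \/ [/\ l v < l w & l v < l u] \/ [/\ l w < l u & l w < l v].
  by lia.
- by move: (no_3cycle_from_min h1 h2 puv pvw); rewrite pwu.
- by move: (no_3cycle_from_min h1 h2 pvw pwu); rewrite puv.
- by move: (no_3cycle_from_min h1 h2 pwu puv); rewrite pvw.
Qed.

Lemma transitive_simple_perm_graph : exists pi, simple_perm_graph_of E l pi.
Proof.
have prec_irr : irreflexive prec by move=> u; rewrite /prec eqxx.
have prec_trans := tournament_transitive prec_total prec_asym no_3cycle.
have [q q_bij ltn_q] := strict_total_order_rank prec_total prec_irr prec_trans.
have [linv lK lKV] := l_bij.
have g_inj : injective (q \o linv).
  by move=> i j /= /(bij_inj q_bij) /(congr1 l); rewrite !lKV.
exists (perm g_inj)^-1%g => u v lvu.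
have uv : u != v by apply: contraTneq lvu => ->; rewrite ltnn.
by rewrite invgK !permE /= !lK ltn_q /prec uv (ltnNge (l u)) (ltnW lvu).
Qed.

End PermutationGraphs.

Lemma no_rainbow_triangle (V : finType) (k : nat) (c : V -> V -> 'I_k) :
  ~ (exists x y z, rainbow_triangle c x y z) ->
  forall x y z, x != y -> y != z -> x != z ->
    [\/ c x y = c y z, c y z = c x z | c x y = c x z].
Proof.
move=> no_rainbow x y z xy yz xz.
have [|ne1] := eqVneq (c x y) (c y z); first by constructor 1.
have [|ne2] := eqVneq (c y z) (c x z); first by constructor 2.
have [|ne3] := eqVneq (c x y) (c x z); first by constructor 3.
by case: no_rainbow; exists x, y, z; split.
Qed.

Section RainbowFreeColorings.

Variables (V : finType) (k : nat) (c : V -> V -> 'I_k).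
Hypothesis c_sym : forall u v, u != v -> c u v = c v u.

Implicit Types (S M : {set V}) (i j : 'I_k).

Lemma color_class_sym i : symmetric (color_class c i).
Proof.
move=> u v; rewrite /color_class; have [->//|uv] := eqVneq u v.
by rewrite (c_sym uv) eq_sym.
Qed.

Definition color_edge S i : rel V :=
  fun x y => [&& x \in S, y \in S & color_class c i x y].

Definition component S i x : {set V} := [set y | connect (color_edge S i) x y].

Definition module S M :=
  forall w x y, w \in S -> w \notin M -> x \in M -> y \in M -> c w x = c w y.

Definition used_colors S : {set 'I_k} :=
  [set i | [exists x, exists y, color_edge S i x y]].

Definition spanning_connected S i :=
  forall x y z, color_edge S i x y -> z \in S -> connect (color_edge S i) x z.

Definition transitive_ranking S (r : V -> nat) :=
  {in S &, injective r} /\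
  forall x y z, x \in S -> y \in S -> z \in S ->
    r x < r y -> r y < r z -> c x y = c y z -> c x z = c x y.

Lemma color_edgeP S i x y :
  reflect [/\ x \in S, y \in S, x != y & c x y = i] (color_edge S i x y).
Proof.
apply: (iffP and3P) => [[-> -> /andP[-> /eqP ->]]|[-> -> xy cxy]] //.
by rewrite /color_class xy cxy eqxx.
Qed.

Lemma color_edge_sym S i : symmetric (color_edge S i).
Proof. by move=> x y; rewrite /color_edge color_class_sym andbCA. Qed.

Lemma connect_color_edge_sym S i : connect_sym (color_edge S i).
Proof. exact/sym_connect_sym/color_edge_sym. Qed.

Lemma connect_color_edge_in S i x y :
  x \in S -> connect (color_edge S i) x y -> y \in S.
Proof.
by move=> xS; apply: (connect_ind (P := fun y => y \in S)) => // a b _ _ /and3P[].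
Qed.

Lemma used_colorP S i :
  reflect (exists x y, color_edge S i x y) (i \in used_colors S).
Proof.
rewrite inE; apply: (iffP existsP) => [[x /existsP[y exy]]|[x [y exy]]].
  by exists x, y.
by exists x; apply/existsP; exists y.
Qed.

Lemma spanning_connected_connect S i :
  spanning_connected S i -> i \in used_colors S ->
  {in S &, forall y z, connect (color_edge S i) y z}.
Proof.
move=> sc /used_colorP[x [x' exx']] y z yS zS.
by apply: connect_trans (sc _ _ _ exx' zS); rewrite connect_color_edge_sym (sc _ _ _ exx').
Qed.

Lemma color_neighbor S i v :
  spanning_connected S i -> i \in used_colors S -> v \in S ->
  exists u, color_edge S i v u.
Proof.
move=> sc ui vS; have /used_colorP[x [y exy]] := ui.
have /color_edgeP[xS _ _ _] := exy.
have /existsP[u evu] : [exists u, color_edge S i v u].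
  move: (spanning_connected_connect sc ui xS vS).
  apply: (connect_ind (P := fun a => [exists u, color_edge S i a u])).
    by apply/existsP; exists y.
  by move=> a b _ _ eab; apply/existsP; exists a; rewrite color_edge_sym.
by exists u.
Qed.

Lemma spanning_connectedVsplit S :
  (forall i, spanning_connected S i) \/
  exists i x y z,
    [/\ color_edge S i x y, z \in S & ~~ connect (color_edge S i) x z].
Proof.
pose split i x y z := [&& color_edge S i x y, z \in S & ~~ connect (color_edge S i) x z].
have [/existsP[i /existsP[x /existsP[y /existsP[z /and3P[exy zS nxz]]]]]|none] :=
  boolP [exists i, exists x, exists y, exists z, split i x y z].
  by right; exists i, x, y, z.
left=> i x y z exy zS; apply: contraNT none => nxz.
by apply/existsP; exists i; apply/existsP; exists x; apply/existsP; exists y;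
  apply/existsP; exists z; apply/and3P.
Qed.

Hypothesis rainbow_free : forall x y z, x != y -> y != z -> x != z ->
  [\/ c x y = c y z, c y z = c x z | c x y = c x z].

Lemma component_module S i x : module S (component S i x).
Proof.
set e := color_edge S i.
suff same w y : w \in S -> ~~ connect e x w -> connect e x y -> c w y = c w x.
  by move=> w y z wS; rewrite !inE => nxw xy xz; rewrite !(same w).
move=> wS nxw xy; apply/eqP; move: y xy.
apply: (connect_ind (P := fun y => c w y == c w x)) => // a b xa /eqP cwa eab.
have off u : connect e x u -> u \in S -> w != u /\ c w u != i.
  move=> xu uS; have wu : w != u by apply: contraNneq nxw => ->.
  split=> //; apply: contraNneq nxw => cwu; apply: connect_trans xu (connect1 _).
  by apply/color_edgeP; rewrite eq_sym -(c_sym wu).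
have /color_edgeP[aS bS ab cab] := eab.
have [wa cwai] := off a xa aS.
have [wb cwbi] := off b (connect_trans xa (connect1 eab)) bS.
case: (rainbow_free wa ab wb) => [h|h|h].
- by rewrite h cab eqxx in cwai.
- by rewrite -h cab eqxx in cwbi.
- by rewrite -h cwa.
Qed.

Lemma used_color_delete S v i j :
  v \in S -> spanning_connected S i -> spanning_connected S j ->
  i \in used_colors S -> j \in used_colors S -> i != j -> i \in used_colors (S :\ v).
Proof.
move=> vS sci scj ui uj ij.
have [u /color_edgeP[_ uS vu cvu]] := color_neighbor scj uj vS.
have [w /color_edgeP[_ wS uw cuw]] := color_neighbor sci ui uS.
apply/used_colorP; exists u, w; apply/color_edgeP; split=> //.
  by rewrite !inE uS eq_sym vu.
rewrite !inE wS andbT; apply: contraNneq ij => wv.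
by rewrite -cuw -cvu wv (c_sym vu).
Qed.

Lemma connect_to_neighbor S v i y :
  v \in S -> spanning_connected S i -> i \in used_colors S -> y \in S :\ v ->
  exists2 y1, connect (color_edge (S :\ v) i) y y1 & c v y1 = i.
Proof.
move=> vS sci ui yS'; set e' := color_edge (S :\ v) i.
have /setD1P[_ yS] := yS'.
have : [exists y1, connect e' y y1 && (c v y1 == i)] || connect e' y v.
  move: (spanning_connected_connect sci ui yS vS).
  apply: (connect_ind (P := fun a =>
    [exists y1, connect e' y y1 && (c v y1 == i)] || connect e' y a)).
    by rewrite connect0 orbT.
  move=> a b _ /orP[-> //|ya] /color_edgeP[_ bS ab cab].
  have aS' := connect_color_edge_in yS' ya; have /setD1P[av _] := aS'.
  have [bv|bv] := eqVneq b v.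
    by apply/orP; left; apply/existsP; exists a; rewrite ya -(c_sym av) -bv cab /=.
  apply/orP; right; apply: connect_trans ya (connect1 _).
  by apply/color_edgeP; split=> //; rewrite !inE bv.
case/orP=> [/existsP[y1 /andP[yy1 /eqP vy1]]|/(connect_color_edge_in yS')].
  by exists y1.
by rewrite !inE eqxx.
Qed.

Lemma color_across_components S v i j p y :
  v \in S -> spanning_connected S i -> i \in used_colors S ->
  p \in S :\ v -> y \in S :\ v -> c v p = j -> j != i ->
  ~~ connect (color_edge (S :\ v) i) p y -> c p y = j.
Proof.
move=> vS sci ui pS' yS' cvp ji npy; set e' := color_edge (S :\ v) i.
have [y1 yy1 cvy1] := connect_to_neighbor vS sci ui yS'.
have y1S' := connect_color_edge_in yS' yy1.
have npy1 : ~~ connect e' p y1.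
  by apply: contra npy => /connect_trans; apply; rewrite connect_color_edge_sym.
have py1 : p != y1 by apply: contraNneq npy1 => ->; apply: connect0.
have cpy1 : c p y1 != i by apply: contra npy1 => /eqP cpy1; apply/connect1/color_edgeP.
have vp : v != p by apply: contraTneq pS' => <-; rewrite !inE eqxx.
have vy1 : v != y1 by apply: contraTneq y1S' => <-; rewrite !inE eqxx.
have cpy1j : c p y1 = j.
  case: (rainbow_free vp py1 vy1) => [h|h|h].
  - by rewrite -h.
  - by rewrite h cvy1 eqxx in cpy1.
  - by rewrite -cvp h cvy1 eqxx in ji.
rewrite -cpy1j; apply: (component_module (S := S :\ v) (i := i) (x := y)) => //;
  by rewrite !inE ?connect0 // connect_color_edge_sym.
Qed.

Lemma used_colorsS S S' : S \subset S' -> used_colors S \subset used_colors S'.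
Proof.
move=> /subsetP sub; apply/subsetP => i /used_colorP[x [y /color_edgeP[xS yS xy cxy]]].
by apply/used_colorP; exists x, y; apply/color_edgeP; split; rewrite ?sub.
Qed.

Lemma split_after_deletion S v i x0 y0 z :
  v \in S -> (forall j, spanning_connected S j) ->
  color_edge (S :\ v) i x0 y0 -> z \in S :\ v ->
  ~~ connect (color_edge (S :\ v) i) x0 z -> #|used_colors S :\ i| <= 1.
Proof.
move=> vS sc ex0y0 zS' nx0z; set e' := color_edge (S :\ v) i.
have ui : i \in used_colors S.
  by apply: subsetP (used_colorsS (subD1set S v)) _ _; apply/used_colorP; exists x0, y0.
have across := color_across_components vS (sc i) ui.
(* Neighbors p, q of v in two further colors would see some vertex outside the
   i-component of p in both of these colors. *)
rewrite leqNgt; apply/card_gt1P => -[j [j' [/setD1P[ji uj] /setD1P[j'i uj'] jj']]].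
have [p /color_edgeP[_ pS vp cvp]] := color_neighbor (sc j) uj vS.
have [q /color_edgeP[_ qS vq cvq]] := color_neighbor (sc j') uj' vS.
have pS' : p \in S :\ v by rewrite !inE pS eq_sym vp.
have qS' : q \in S :\ v by rewrite !inE qS eq_sym vq.
have [pq|npq] := boolP (connect e' p q); last first.
  have pq : p != q by apply: contraNneq npq => ->; apply: connect0.
  have nqp : ~~ connect e' q p by rewrite connect_color_edge_sym.
  move: jj'; rewrite -(across _ _ _ pS' qS' cvp ji npq) -(across _ _ _ qS' pS' cvq j'i nqp).
  by rewrite (c_sym pq) eqxx.
have [y yS' npy] : exists2 y, y \in S :\ v & ~~ connect e' p y.
  have [px0|] := boolP (connect e' p x0); last by exists x0; case/color_edgeP: ex0y0.
  exists z => //; apply: contra nx0z; apply: connect_trans.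
  by rewrite connect_color_edge_sym.
have nqy : ~~ connect e' q y by apply: contra npy; apply: connect_trans pq.
have py : p != y by apply: contraNneq npy => ->; apply: connect0.
have qy : q != y by apply: contraNneq nqy => ->; apply: connect0.
have := component_module (S := S :\ v) (i := i) (x := p) yS'.
move=> /(_ p q); rewrite !inE connect0 => /(_ npy isT pq).
rewrite -(c_sym py) -(c_sym qy) (across _ _ _ pS' yS' cvp ji npy).
by rewrite (across _ _ _ qS' yS' cvq j'i nqy) => jj; rewrite jj eqxx in jj'.
Qed.

Lemma spanning_connected_colors S :
  (forall i, spanning_connected S i) -> #|used_colors S| <= 2.
Proof.
have [n] := ubnP #|S|; elim: n S => // n IH S /ltnSE leSn sc.
rewrite leqNgt; apply/negP => three.
have /card_gt0P[_ /used_colorP[v [u /color_edgeP[vS _ _ _]]]] : 0 < #|used_colors S|.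
  exact: leq_trans three.
have sub : used_colors S \subset used_colors (S :\ v).
  apply/subsetP => i ui.
  have /card_gt0P[j /setD1P[ji uj]] : 0 < #|used_colors S :\ i|.
    by move: three; rewrite (cardsD1 i) ui /=; lia.
  by apply: used_color_delete vS (sc i) (sc j) ui uj _; rewrite eq_sym.
have three' : 2 < #|used_colors (S :\ v)| := leq_trans three (subset_leq_card sub).
have [sc'|[i [x0 [y0 [z [ex0y0 zS' nx0z]]]]]] := spanning_connectedVsplit (S :\ v).
  have ltSn : #|S :\ v| < n by move: leSn; rewrite (cardsD1 v) vS.
  by move: (IH _ ltSn sc'); rewrite leqNgt three'.
have ui : i \in used_colors S.
  by apply: subsetP (used_colorsS (subD1set S v)) _ _; apply/used_colorP; exists x0, y0.
move: (split_after_deletion vS sc ex0y0 zS' nx0z) three.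
by rewrite (cardsD1 i (used_colors S)) ui add1n ltnS ltnNge => ->.
Qed.

Lemma two_color_ranking S :
  (forall i, simple_perm_graph (color_class c i)) -> #|used_colors S| <= 2 ->
  exists r, transitive_ranking S r.
Proof.
move=> perm_classes le2.
have [le1|/card_gt1P[x0 [y0 [x0S y0S x0y0]]]] := leqP #|S| 1.
  by exists (fun=> 0); split=> [x y xS yS _|x y z _ _ _]; first exact: (card_le1_eqP le1).
set a := c x0 y0; have [l [l_bij [pi pg]]] := perm_classes a.
have trE := simple_perm_graph_of_transitive (color_class_sym a) pg.
have used u w : u \in S -> w \in S -> u != w -> c u w \in used_colors S.
  by move=> uS wS uw; apply/used_colorP; exists u, w; apply/color_edgeP.
exists (fun v => l v); split=> [x y _ _ /val_inj/(bij_inj l_bij) //|x y z xS yS zS lxy lyz cxy].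
have xy : x != y by apply: contraTneq lxy => ->; rewrite ltnn.
have yz : y != z by apply: contraTneq lyz => ->; rewrite ltnn.
have xz : x != z by apply: contraTneq (ltn_trans lxy lyz) => ->; rewrite ltnn.
move: (trE _ _ _ lxy lyz); rewrite /color_class xy yz xz /= cxy => /(_ erefl).
have [->|nyz /negbT nxz] := eqVneq (c y z) a; first by move/eqP.
apply/eqP; apply: contraTT le2 => nxy; rewrite -ltnNge; apply/card_gt2P.
by exists a, (c y z), (c x z); split; [split; exact: used | split; rewrite // eq_sym].
Qed.

Section Substitution.

Variables (S M : {set V}) (x0 : V) (rM rQ : V -> nat).
Hypotheses (x0M : x0 \in M) (modM : module S M).
Hypotheses (rM_tr : transitive_ranking M rM)
           (rQ_tr : transitive_ranking ((S :\: M) :|: [set x0]) rQ).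

Let ph x := if x \in M then x0 else x.

Let both x y := (x \in M) && (y \in M).

Let lex x := rQ (ph x) * (\max_(y in M) rM y).+1 + (if x \in M then rM x else 0).

Let phQ x : x \in S -> ph x \in (S :\: M) :|: [set x0].
Proof. by rewrite /ph !inE; case: ifP => [_ _|-> ->]; rewrite ?eqxx ?orbT. Qed.

Let ph_neq x y : x != y -> ~~ both x y -> ph x != ph y.
Proof.
rewrite /ph /both; case: ifP => xM; case: ifP => yM //= _ _.
- by apply: contraFneq yM => <-.
- by apply: contraFneq xM => ->.
Qed.

Let c_ph x y : x \in S -> y \in S -> x != y -> ~~ both x y -> c (ph x) (ph y) = c x y.
Proof.
rewrite /ph /both; case: ifP => xM; case: ifP => yM //= xS yS xy _.
- have x0y : x0 != y by apply: contraFneq yM => <-.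
  by rewrite (c_sym x0y) (modM yS (negbT yM) x0M xM) c_sym // eq_sym.
- by rewrite (modM xS (negbT xM) x0M yM).
Qed.

Let ltn_lex x y : x \in S -> y \in S ->
  (lex x < lex y) = if both x y then rM x < rM y else rQ (ph x) < rQ (ph y).
Proof.
have rM_lt z : (if z \in M then rM z else 0) < (\max_(y in M) rM y).+1.
  by case: ifP => // zM; rewrite ltnS (leq_bigmax_cond (P := mem M)).
move=> xS yS; rewrite /lex ltn_lexM //; have [bxy|nb] := boolP (both x y).
  by have /andP[xM yM] := bxy; rewrite /ph xM yM ltnn eqxx.
have [->|xy] := eqVneq x y; first by rewrite !ltnn andbF.
by rewrite (inj_in_eq rQ_tr.1) ?phQ // (negbTE (ph_neq xy nb)) orbF.
Qed.

Let lex_inj : {in S &, injective lex}.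
Proof.
move=> x y xS yS lxy; apply/eqP; apply: contraT => xy.
move: (ltn_lex xS yS) (ltn_lex yS xS); rewrite lxy ltnn /both (andbC (y \in M)).
case: ifP => [/andP[xM yM]|/negbT nb] /esym/negbT + /esym/negbT; rewrite -!leqNgt => le1 le2.
  by move: xy; rewrite -(inj_in_eq rM_tr.1) // eqn_leq le1 le2.
by move: (ph_neq xy nb); rewrite -(inj_in_eq rQ_tr.1) ?phQ // eqn_leq le1 le2.
Qed.

Lemma substitution_ranking : exists r, transitive_ranking S r.
Proof.
exists lex; split=> // x y z xS yS zS lxy lyz.
have xy : x != y by apply: contraTneq lxy => ->; rewrite ltnn.
have yz : y != z by apply: contraTneq lyz => ->; rewrite ltnn.
have xz : x != z by apply: contraTneq (ltn_trans lxy lyz) => ->; rewrite ltnn.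
move: lxy lyz; rewrite !ltn_lex //.
have quotient : ~~ both x y -> ~~ both y z -> ~~ both x z ->
    rQ (ph x) < rQ (ph y) -> rQ (ph y) < rQ (ph z) -> c x y = c y z -> c x z = c x y.
  move=> nxy nyz nxz qxy qyz cxy; rewrite -(c_ph xS zS) // -(c_ph xS yS) //.
  by apply: rQ_tr.2; rewrite ?phQ // (c_ph xS yS) // (c_ph yS zS).
rewrite /both in quotient *.
case xM: (x \in M); case yM: (y \in M); case zM: (z \in M) => /=;
  try by apply: quotient; rewrite ?xM ?yM ?zM.
- exact: rM_tr.2.
- by move=> _ _ cxy; rewrite (c_sym xz) (modM zS (negbT zM) xM yM) cxy c_sym // eq_sym.
- by rewrite /ph xM yM zM => /ltn_trans h /h; rewrite ltnn.
- by move=> _ _ _; rewrite (modM xS (negbT xM) zM yM).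
Qed.

End Substitution.

Lemma transitive_ranking_exists S :
  (forall i, simple_perm_graph (color_class c i)) -> exists r, transitive_ranking S r.
Proof.
move=> perm_classes; have [n] := ubnP #|S|; elim: n S => // n IH S /ltnSE leSn.
have [sc|[i [x0 [y0 [z [ex0y0 zS nx0z]]]]]] := spanning_connectedVsplit S.
  exact/two_color_ranking/spanning_connected_colors.
set X := component S i x0.
have XS : X \subset S.
  by apply/subsetP => y; rewrite inE; apply/connect_color_edge_in; case/and3P: ex0y0.
have x0X : x0 \in X by rewrite inE connect0.
have ltXS : #|X| < #|S| by apply/proper_card/properP; split=> //; exists z; rewrite ?inE.
have gt1X : 1 < #|X|.
  apply/card_gt1P; exists x0, y0; rewrite !inE connect0 connect1 //.
  by case/color_edgeP: ex0y0.
have [rX rX_tr] := IH X (leq_trans ltXS leSn).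
have ltQ : #|(S :\: X) :|: [set x0]| < n.
  rewrite setUC cardsU1 cardsD (setIidPr XS).
  by move: (subset_leq_card XS) leSn; case: (x0 \notin S :\: X) => /=; lia.
have [rQ rQ_tr] := IH _ ltQ.
exact: substitution_ranking x0X (@component_module S i x0) rX_tr rQ_tr.
Qed.

Lemma color_class_transitive i r :
  transitive_ranking [set: V] r -> transitive_along r (color_class c i).
Proof.
move=> [_ r_tr] x y z rxy ryz.
have xy : x != y by apply: contraTneq rxy => ->; rewrite ltnn.
have yz : y != z by apply: contraTneq ryz => ->; rewrite ltnn.
have xz : x != z by apply: contraTneq (ltn_trans rxy ryz) => ->; rewrite ltnn.
rewrite /color_class xy yz xz /=.
have [cxy _|ne Exy] := eqVneq (c x y) (c y z); first by rewrite (r_tr x y z) ?inE.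
case: (rainbow_free xy yz xz) => [cxy|<-|<-] //; first by rewrite cxy eqxx in ne.
Qed.

End RainbowFreeColorings.

Theorem proposition4p14 (V : finType) (k : nat) (c : V -> V -> 'I_k) :
  complete_edge_colored c ->
  (forall i : 'I_k, simple_perm_graph (color_class c i)) ->
  ~ (exists x y z : V, rainbow_triangle c x y z) ->
  complete_edge_colored_perm_graph c.
Proof.
move=> [c_sym _] perm_classes /no_rainbow_triangle rainbow_free.
have [r r_rank] := transitive_ranking_exists c_sym rainbow_free [set: V] perm_classes.
have r_total x y : x != y -> (r x < r y) || (r y < r x).
  by rewrite -neq_ltn (inj_in_eq r_rank.1) ?inE.
have [l l_bij ltn_l] := strict_total_order_rank r_total (fun x => ltnn (r x))
  (fun y x z => @ltn_trans (r y) (r x) (r z)).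
exists l; split=> // i; apply: transitive_simple_perm_graph => //.
  exact: color_class_sym.
by move=> x y z; rewrite !ltn_l; exact: (color_class_transitive rainbow_free r_rank).
Qed.
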